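(* Let $d\ge1$, $x_1<x_2$, $x_0\in[x_1,x_2]$, let $p,q,r_1,\dots,r_d,s_1,\dots,s_d$ be functions on $[x_1,x_2]$, $Ly=(py')'+qy$, $R_i[y]=r_iy+s_iy'$, and let $u_0$ be a nonvanishing function on $[x_1,x_2]$ with $Lu_0=0$. Then for every $\mathbf n\in\mathbb Z_{\ge0}^d$, $$L\big[u_0\tilde X^{(2\mathbf n)}\big]=2|\mathbf n|(2|\mathbf n|-1)\sum_{i=1}^dR_i\big[u_0\tilde X^{(2\mathbf n-2\delta_i)}\big]$$ and $$L\big[u_0X^{(2\mathbf n+\frac1d\mathbf 1)}\big]=(2|\mathbf n|+1)(2|\mathbf n|)\sum_{i=1}^dR_i\big[u_0X^{(2\mathbf n-2\delta_i+\frac1d\mathbf 1)}\big].$$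
   Context: Notation: $\int f$ denotes $x\mapsto\int_{x_0}^x f(s)\,ds$; $|\mathbf j|=j_1+\cdots+j_d$; $\delta_i$ the $i$-th standard basis vector; $\mathbf 1=(1,\dots,1)$. Generalized formal powers $\tilde X$: for $\mathbf j\in\mathbb Z^d$, admissible means at most one $j_i$ odd; $\tilde X^{(\mathbf 0)}\equiv1$; $\tilde X^{(\mathbf j)}\equiv0$ if some $j_i<0$; for admissible $\mathbf j\ge0$, $\mathbf j\ne\mathbf0$: if $|\mathbf j|$ is odd with odd entry $j_i$, $\tilde X^{(\mathbf j)}=|\mathbf j|\int u_0R_i[u_0\tilde X^{(\mathbf j-\delta_i)}]$; if $|\mathbf j|$ is even, $\tilde X^{(\mathbf j)}=|\mathbf j|\int\frac{1}{pu_0^2}\sum_{i=1}^d\tilde X^{(\mathbf j-\delta_i)}$. Generalized formal powers $X$: indexed by $\mathbf j=\mathbf m+\frac1d\mathbf 1$, $\mathbf m\in\mathbb Z^d$, $|\mathbf j|=|\mathbf m|+1$; admissible means at most one $m_i$ odd; $X^{(\frac1d\mathbf 1-\delta_i)}\equiv\frac1d$; $X^{(\mathbf m+\frac1d\mathbf 1)}\equiv0$ if some $m_i<0$ and $\mathbf m\notin\{-\delta_1,\dots,-\delta_d\}$; for admissible $\mathbf j$ with $\mathbf m\ge0$: if $|\mathbf j|$ is even (exactly one $m_i$ odd), $X^{(\mathbf j)}=|\mathbf j|\int u_0R_i[u_0X^{(\mathbf j-\delta_i)}]$ for that $i$; if $|\mathbf j|$ is odd, $X^{(\mathbf j)}=|\mathbf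 j|\int\frac{1}{pu_0^2}\sum_{i=1}^dX^{(\mathbf j-\delta_i)}$. *)

From Stdlib Require Import Reals Lra ZArith List ClassicalEpsilon.
From Coquelicot Require Import Coquelicot.
Open Scope R_scope.

Definition mi := nat -> Z.

Definition delta (i : nat) : mi := fun k => if Nat.eqb k i then 1%Z else 0%Z.
Definition mi_sub (j : mi) (i : nat) : mi := fun k => (j k - delta i k)%Z.
Definition mi_abs (d : nat) (j : mi) : Z := fold_right Z.add 0%Z (map j (seq 0 d)).
Definition has_neg (d : nat) (j : mi) : bool :=
  existsb (fun i => Z.ltb (j i) 0) (seq 0 d).
Definition admissible (d : nat) (j : mi) : bool :=
  Nat.leb (length (filter (fun i => Z.odd (j i)) (seq 0 d))) 1.
Definition odd_idx (d : nat) (j : mi) : nat :=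
  match find (fun i => Z.odd (j i)) (seq 0 d) with Some i => i | None => 0%nat end.
Definition is_neg_delta (d : nat) (m : mi) : bool :=
  existsb (fun i => forallb (fun k => Z.eqb (m k) (- delta i k)%Z) (seq 0 d)) (seq 0 d).
Definition nabs (d : nat) (n : nat -> nat) : nat := fold_right Nat.add 0%nat (map n (seq 0 d)).
Definition sumR (d : nat) (F : nat -> R) : R := fold_right Rplus 0 (map F (seq 0 d)).

Definition Icc (a b : R) : R -> Prop := fun t => a <= t <= b.

Definition cont_on (a b : R) (f : R -> R) : Prop :=
  forall x, a <= x <= b -> filterlim f (within (Icc a b) (locally x)) (locally (f x)).

(* derivative relative to [a,b] (one-sided at the end points) *)
Definition is_deriv_on (a b : R) (f : R -> R) (x l : R) : Prop :=
  filterlim (fun t => (f t - f x) / (t - x))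
    (within (fun t => t <> x /\ a <= t <= b) (locally x)) (locally l).
Definition ex_deriv_on (a b : R) (f : R -> R) (x : R) : Prop :=
  exists l, is_deriv_on a b f x l.
Definition Dab (a b : R) (f : R -> R) (x : R) : R :=
  epsilon (inhabits 0) (fun l => is_deriv_on a b f x l).

Definition Lop (a b : R) (p q y : R -> R) (x : R) : R :=
  Dab a b (fun t => p t * Dab a b y t) x + q x * y x.
Definition Rop (a b : R) (r s y : R -> R) (x : R) : R :=
  r x * y x + s x * Dab a b y x.

Section Powers.
Variables (a b x0 : R) (p u0 : R -> R) (r s : nat -> R -> R) (d : nat).

(* fuel is |j| *)
Fixpoint Xt_aux (fuel : nat) (j : mi) : R -> R :=
  if has_neg d j then fun _ => 0 else
  match fuel with
  | O => fun _ => 1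
  | S k =>
    if negb (admissible d j) then fun _ => 0 else
    if Nat.odd (S k) then
      let i := odd_idx d j in
      fun x => INR (S k) *
        RInt (fun t => u0 t * Rop a b (r i) (s i)
                          (fun y => u0 y * Xt_aux k (mi_sub j i) y) t) x0 x
    else
      fun x => INR (S k) *
        RInt (fun t => / (p t * u0 t ^ 2) *
                        sumR d (fun i => Xt_aux k (mi_sub j i) t)) x0 x
  end.

Definition Xt (j : mi) : R -> R := Xt_aux (Z.to_nat (mi_abs d j)) j.

(* X^{(m + 1/d 1)}, fuel is |j| = |m| + 1 *)
Fixpoint X_aux (fuel : nat) (m : mi) : R -> R :=
  if is_neg_delta d m then fun _ => / INR d else
  if has_neg d m then fun _ => 0 else
  match fuel with
  | O => fun _ => 0
  | S k =>
    if negb (admissible d m) then fun _ => 0 else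
    if Nat.even (S k) then
      let i := odd_idx d m in
      fun x => INR (S k) *
        RInt (fun t => u0 t * Rop a b (r i) (s i)
                          (fun y => u0 y * X_aux k (mi_sub m i) y) t) x0 x
    else
      fun x => INR (S k) *
        RInt (fun t => / (p t * u0 t ^ 2) *
                        sumR d (fun i => X_aux k (mi_sub m i) t)) x0 x
  end.

(* Xp m denotes X^{(m + (1/d) 1)} *)
Definition Xp (m : mi) : R -> R := X_aux (Z.to_nat (mi_abs d m) + 1) m.

End Powers.

From Stdlib Require Import Reals ZArith.
From Coquelicot Require Import Coquelicot.
Open Scope R_scope.
From Stdlib Require Import Lra Lia List Bool ClassicalEpsilon FunctionalExtensionality.

(* Write an even power as [c * RInt (S / (p u0^2))], where [S] sums the powers one level
   below.  Because [L u0 = 0], the operator collapses on such a function: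
   [L[u0 * c * RInt (S / (p u0^2))] = c * S' / u0].  Each summand of [S] is in turn
   [c' * RInt (u0 * R_i[u0 Y])], whose derivative is [c' * u0 * R_i[u0 Y]]; the two
   factors [c = |j|] and [c' = |j| - 1] give the coefficients of the theorem. *)

Section FilterlimR.
Context {T : Type} {F : (T -> Prop) -> Prop} {FF : Filter F}.

Lemma lim_plus (f g : T -> R) a b : filterlim f F (locally a) -> filterlim g F (locally b) ->
  filterlim (fun t => f t + g t) F (locally (a + b)).
Proof.
  intros Hf Hg. eapply (filterlim_comp_2 f g Rplus); [exact Hf | exact Hg |].
  apply (@filterlim_plus R_AbsRing R_NormedModule).
Qed.

Lemma lim_mult (f g : T -> R) a b : filterlim f F (locally a) -> filterlim g F (locally b) ->
  filterlim (fun t => f t * g t) F (locally (a * b)).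
Proof.
  intros Hf Hg. eapply (filterlim_comp_2 f g Rmult); [exact Hf | exact Hg |].
  apply (@filterlim_mult R_AbsRing).
Qed.

Lemma lim_inv (f : T -> R) a : a <> 0 -> filterlim f F (locally a) ->
  filterlim (fun t => / f t) F (locally (/ a)).
Proof. intros Ha Hf. eapply filterlim_comp; [exact Hf | apply continuous_Rinv, Ha]. Qed.

End FilterlimR.

Definition punctured_Icc (a b x : R) := within (fun t => t <> x /\ a <= t <= b) (locally x).

Lemma punctured_Icc_proper a b x : a < b -> a <= x <= b -> ProperFilter' (punctured_Icc a b x).
Proof.
  intros Hab Hx. split; [| apply within_filter, locally_filter].
  intros [eps He]. pose proof (cond_pos eps) as Heps.
  destruct (Rlt_or_le x b) as [Hxb | Hxb].
  - pose proof (Rmin_l (eps / 2) ((b - x) / 2)). pose proof (Rmin_r (eps / 2) ((b - x) / 2)).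
    assert (0 < Rmin (eps / 2) ((b - x) / 2)) by (apply Rmin_glb_lt; lra).
    set (h := Rmin (eps / 2) ((b - x) / 2)) in *.
    apply (He (x + h)).
    + change (Rabs (x + h - x) < eps). rewrite Rabs_right; lra.
    + split; [intros E | split]; lra.
  - pose proof (Rmin_l (eps / 2) ((x - a) / 2)). pose proof (Rmin_r (eps / 2) ((x - a) / 2)).
    assert (0 < Rmin (eps / 2) ((x - a) / 2)) by (apply Rmin_glb_lt; lra).
    set (h := Rmin (eps / 2) ((x - a) / 2)) in *.
    apply (He (x - h)).
    + change (Rabs (x - h - x) < eps). rewrite Rabs_left; lra.
    + split; [intros E | split]; lra.
Qed.

Lemma is_deriv_on_unique a b f x l1 l2 : a < b -> a <= x <= b ->
  is_deriv_on a b f x l1 -> is_deriv_on a b f x l2 -> l1 = l2.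
Proof.
  intros Hab Hx. pose proof (punctured_Icc_proper a b x Hab Hx).
  exact (@filterlim_locally_unique R R_AbsRing R_NormedModule _ _ _ l1 l2).
Qed.

Lemma Dab_unique a b f x l : a < b -> a <= x <= b -> is_deriv_on a b f x l -> Dab a b f x = l.
Proof.
  intros Hab Hx Hl. unfold Dab.
  apply (is_deriv_on_unique a b f x); auto.
  exact (epsilon_spec (inhabits 0) _ (ex_intro _ l Hl)).
Qed.

Lemma is_deriv_on_lim a b f x l : is_deriv_on a b f x l ->
  filterlim f (punctured_Icc a b x) (locally (f x)).
Proof.
  intros Hl.
  assert (Hid : filterlim (fun t => t - x) (punctured_Icc a b x) (locally (x - x))).
  { apply lim_plus; [| apply filterlim_const].
    apply (filterlim_filter_le_1 (F := locally x)); [| apply filterlim_id].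
    intros P HP. exact (filter_imp P _ (fun t Pt _ => Pt) HP). }
  pose proof (lim_plus _ _ _ _ (filterlim_const (f x)) (lim_mult _ _ _ _ Hl Hid)) as Hf.
  replace (f x + l * (x - x)) with (f x) in Hf by ring.
  eapply filterlim_within_ext; [| exact Hf].
  intros t [Ht _]. simpl. field. intros E. apply Ht. lra.
Qed.

Lemma is_deriv_on_cont a b f x l : is_deriv_on a b f x l ->
  filterlim f (within (Icc a b) (locally x)) (locally (f x)).
Proof.
  intros Hl. apply filterlim_locally. intros eps.
  pose proof (proj1 (filterlim_locally _ _) (is_deriv_on_lim a b f x l Hl) eps) as Hf.
  unfold punctured_Icc, within in *. apply filter_imp with (2 := Hf). intros t Ht Hicc.
  destruct (Req_dec t x) as [-> | Hne]; [apply ball_center | apply Ht; split; auto].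
Qed.

Lemma is_deriv_on_ext a b f g x l : a <= x <= b -> (forall t, a <= t <= b -> f t = g t) ->
  is_deriv_on a b f x l -> is_deriv_on a b g x l.
Proof.
  intros Hx Hfg Hl. eapply filterlim_within_ext; [| exact Hl].
  intros t [_ Ht]. simpl. rewrite (Hfg t Ht), (Hfg x Hx). reflexivity.
Qed.

Lemma is_deriv_on_const a b c x : is_deriv_on a b (fun _ => c) x 0.
Proof.
  eapply filterlim_within_ext; [| apply (filterlim_const 0)].
  intros t [Ht _]. simpl. field. intros E. apply Ht. lra.
Qed.

Lemma Dab_const a b c x : a < b -> a <= x <= b -> Dab a b (fun _ => c) x = 0.
Proof. intros Hab Hx. apply Dab_unique, is_deriv_on_const; auto. Qed.

Lemma is_deriv_on_plus a b f g x lf lg : is_deriv_on a b f x lf -> is_deriv_on a b g x lg ->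
  is_deriv_on a b (fun t => f t + g t) x (lf + lg).
Proof.
  intros Hf Hg. eapply filterlim_within_ext; [| apply lim_plus; [exact Hf | exact Hg]].
  intros t [Ht _]. simpl. field. intros E. apply Ht. lra.
Qed.

Lemma is_deriv_on_mult a b f g x lf lg : is_deriv_on a b f x lf -> is_deriv_on a b g x lg ->
  is_deriv_on a b (fun t => f t * g t) x (lf * g x + f x * lg).
Proof.
  intros Hf Hg. eapply filterlim_within_ext.
  2: apply lim_plus; apply lim_mult;
       [exact Hf | exact (is_deriv_on_lim _ _ _ _ _ Hg) | apply filterlim_const | exact Hg].
  intros t [Ht _]. simpl. field. intros E. apply Ht. lra.
Qed.

Lemma is_deriv_on_inv a b g x lg : (forall t, a <= t <= b -> g t <> 0) -> a <= x <= b ->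
  is_deriv_on a b g x lg -> is_deriv_on a b (fun t => / g t) x (- lg / (g x * g x)).
Proof.
  intros Hg0 Hx Hg.
  replace (- lg / (g x * g x)) with (lg * (- / g x * / g x)) by (field; auto).
  eapply filterlim_within_ext.
  2: apply lim_mult; [exact Hg | apply lim_mult; [apply filterlim_const |
       apply lim_inv; [apply Hg0, Hx | exact (is_deriv_on_lim _ _ _ _ _ Hg)]]].
  intros t [Ht Hab]. simpl. field. repeat split; auto. intros E. apply Ht. lra.
Qed.

Lemma cont_on_ext a b f g : (forall t, a <= t <= b -> f t = g t) -> cont_on a b f -> cont_on a b g.
Proof.
  intros Hfg Hf x Hx. rewrite <- (Hfg x Hx).
  eapply filterlim_within_ext; [| apply (Hf x Hx)]. intros t Ht. apply Hfg, Ht.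
Qed.

Lemma cont_on_const a b c : cont_on a b (fun _ => c).
Proof. intros x Hx. apply filterlim_const. Qed.

Lemma cont_on_plus a b f g : cont_on a b f -> cont_on a b g -> cont_on a b (fun t => f t + g t).
Proof. intros Hf Hg x Hx. apply lim_plus; auto. Qed.

Lemma cont_on_mult a b f g : cont_on a b f -> cont_on a b g -> cont_on a b (fun t => f t * g t).
Proof. intros Hf Hg x Hx. apply lim_mult; auto. Qed.

Lemma cont_on_inv a b f : (forall t, a <= t <= b -> f t <> 0) -> cont_on a b f ->
  cont_on a b (fun t => / f t).
Proof. intros Hf0 Hf x Hx. apply lim_inv; auto. Qed.

Lemma cont_on_sumR a b d (F : nat -> R -> R) : (forall i, (i < d)%nat -> cont_on a b (F i)) ->
  cont_on a b (fun t => sumR d (fun i => F i t)).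
Proof.
  intros HF. unfold sumR.
  assert (HL : forall L, (forall i, In i L -> cont_on a b (F i)) ->
    cont_on a b (fun t => fold_right Rplus 0 (map (fun i => F i t) L))).
  { induction L as [| i L IH]; intros HL; simpl.
    - apply cont_on_const.
    - apply cont_on_plus; [apply HL; left | apply IH; intros; apply HL; right]; auto. }
  apply HL. intros i Hi. apply in_seq in Hi. apply HF. lia.
Qed.

Definition clamp (a b t : R) := Rmax a (Rmin b t).

Lemma clamp_Icc a b t : a <= b -> a <= clamp a b t <= b.
Proof. intros Hab. unfold clamp, Rmax, Rmin. repeat destruct Rle_dec; lra. Qed.

Lemma clamp_id a b t : a <= t <= b -> clamp a b t = t.
Proof. intros Ht. unfold clamp, Rmax, Rmin. repeat destruct Rle_dec; lra. Qed.

Lemma clamp_1_lipschitz a b t z : Rabs (clamp a b t - clamp a b z) <= Rabs (t - z).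
Proof.
  unfold clamp, Rmax, Rmin. repeat destruct Rle_dec; unfold Rabs; repeat destruct Rcase_abs; lra.
Qed.

Lemma continuous_clamp_comp a b g z : a <= b -> cont_on a b g ->
  continuous (fun t => g (clamp a b t)) z.
Proof.
  intros Hab Hg. eapply filterlim_comp; [| apply (Hg _ (clamp_Icc a b z Hab))].
  intros P [eps He]. exists eps. intros t Ht. apply He; [| apply clamp_Icc, Hab].
  eapply Rle_lt_trans; [apply clamp_1_lipschitz | exact Ht].
Qed.

Lemma is_deriv_on_derivable_pt_lim a b f x l : derivable_pt_lim f x l -> is_deriv_on a b f x l.
Proof.
  intros Hl. apply filterlim_locally. intros eps.
  destruct (Hl eps (cond_pos eps)) as [eta Hd].
  exists eta. intros t Ht [Htx _].
  assert (Hh : t - x <> 0) by (intros E; apply Htx; lra).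
  specialize (Hd (t - x) Hh Ht).
  assert (Et : (x + (t - x) : R) = t) by (simpl; ring). rewrite Et in Hd. exact Hd.
Qed.

(* [g] is only continuous on [a, b], so it is first extended to all of [R] by [clamp]. *)
Lemma is_deriv_on_RInt a b g x0 x : a < b -> cont_on a b g -> a <= x0 <= b -> a <= x <= b ->
  is_deriv_on a b (fun y => RInt g x0 y) x (g x).
Proof.
  intros Hab Hg H0 Hx.
  set (G := fun t => g (clamp a b t)).
  assert (HG : forall z, continuous G z) by (intros z; apply continuous_clamp_comp; auto; lra).
  assert (HD : is_derive (fun y => RInt G x0 y) x (G x)).
  { apply (is_derive_RInt G _ x0 x); [| apply HG].
    apply filter_forall. intros y. apply (@RInt_correct R_CompleteNormedModule).
    apply ex_RInt_continuous. intros; apply HG. }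
  apply is_derive_Reals, (is_deriv_on_derivable_pt_lim a b) in HD.
  unfold G in HD at 2. rewrite clamp_id in HD by exact Hx.
  apply (is_deriv_on_ext _ _ (fun y => RInt G x0 y) _ _ _ Hx); [| exact HD].
  intros y Hy. apply RInt_ext. intros z Hz. unfold G. rewrite clamp_id; [reflexivity |].
  unfold Rmin, Rmax in Hz. destruct Rle_dec in Hz; lra.
Qed.

Definition C1_on (a b : R) (f : R -> R) : Prop :=
  (forall x, a <= x <= b -> ex_deriv_on a b f x) /\ cont_on a b (Dab a b f).

Lemma C1_on_is_deriv a b f x : a < b -> C1_on a b f -> a <= x <= b ->
  is_deriv_on a b f x (Dab a b f x).
Proof.
  intros Hab [Hf _] Hx. destruct (Hf x Hx) as [l Hl].
  rewrite (Dab_unique _ _ _ _ _ Hab Hx Hl). exact Hl.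
Qed.

Lemma C1_on_cont a b f : C1_on a b f -> cont_on a b f.
Proof. intros [Hf _] x Hx. destruct (Hf x Hx) as [l Hl]. exact (is_deriv_on_cont _ _ _ _ _ Hl). Qed.

Lemma C1_on_intro a b f f' : a < b -> (forall x, a <= x <= b -> is_deriv_on a b f x (f' x)) ->
  cont_on a b f' -> C1_on a b f.
Proof.
  intros Hab Hf Hf'. split; [intros x Hx; exists (f' x); auto |].
  apply (cont_on_ext _ _ f'); [| exact Hf']. intros t Ht. symmetry. apply Dab_unique; auto.
Qed.

Lemma C1_on_const a b c : a < b -> C1_on a b (fun _ => c).
Proof.
  intros Hab. apply (C1_on_intro _ _ _ (fun _ => 0)); auto.
  - intros. apply is_deriv_on_const.
  - apply cont_on_const.
Qed.

Lemma C1_on_mult a b f g : a < b -> C1_on a b f -> C1_on a b g -> C1_on a b (fun t => f t * g t).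
Proof.
  intros Hab Hf Hg.
  apply (C1_on_intro _ _ _ (fun t => Dab a b f t * g t + f t * Dab a b g t)); auto.
  - intros. apply is_deriv_on_mult; apply C1_on_is_deriv; auto.
  - apply cont_on_plus; apply cont_on_mult; try apply Hf; try apply Hg; apply C1_on_cont; auto.
Qed.

Lemma is_deriv_on_scal_RInt a b c g x0 x : a < b -> cont_on a b g -> a <= x0 <= b -> a <= x <= b ->
  is_deriv_on a b (fun y => c * RInt g x0 y) x (c * g x).
Proof.
  intros Hab Hg H0 Hx. replace (c * g x) with (0 * RInt g x0 x + c * g x) by ring.
  apply is_deriv_on_mult; [apply is_deriv_on_const | apply is_deriv_on_RInt; auto].
Qed.

Lemma C1_on_scal_RInt a b c g x0 : a < b -> cont_on a b g -> a <= x0 <= b ->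
  C1_on a b (fun y => c * RInt g x0 y).
Proof.
  intros Hab Hg H0. apply (C1_on_intro _ _ _ (fun t => c * g t)); [exact Hab | |].
  - intros x Hx. apply is_deriv_on_scal_RInt; auto.
  - apply cont_on_mult; [apply cont_on_const | exact Hg].
Qed.

Lemma is_deriv_on_sumR a b d (F : nat -> R -> R) x (l : nat -> R) :
  (forall i, (i < d)%nat -> is_deriv_on a b (F i) x (l i)) ->
  is_deriv_on a b (fun t => sumR d (fun i => F i t)) x (sumR d l).
Proof.
  intros HF. unfold sumR.
  assert (HL : forall L, (forall i, In i L -> is_deriv_on a b (F i) x (l i)) ->
    is_deriv_on a b (fun t => fold_right Rplus 0 (map (fun i => F i t) L)) x
      (fold_right Rplus 0 (map l L))).
  { induction L as [| i L IH]; intros HL; simpl.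
    - apply is_deriv_on_const.
    - apply is_deriv_on_plus; [apply HL; left | apply IH; intros; apply HL; right]; auto. }
  apply HL. intros i Hi. apply in_seq in Hi. apply HF. lia.
Qed.

Lemma C1_on_sumR a b d (F : nat -> R -> R) : a < b -> (forall i, (i < d)%nat -> C1_on a b (F i)) ->
  C1_on a b (fun t => sumR d (fun i => F i t)).
Proof.
  intros Hab HF. apply (C1_on_intro _ _ _ (fun t => sumR d (fun i => Dab a b (F i) t))); [exact Hab | |].
  - intros x Hx. apply is_deriv_on_sumR. intros i Hi. apply C1_on_is_deriv; auto.
  - apply cont_on_sumR. intros i Hi. exact (proj2 (HF i Hi)).
Qed.

Lemma sumR_scal d (F : nat -> R) c : sumR d (fun i => c * F i) = c * sumR d F.
Proof. unfold sumR. induction (seq 0 d) as [| i L IH]; simpl; [| rewrite IH]; ring. Qed.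

Lemma sumR_ext d (F G : nat -> R) : (forall i, (i < d)%nat -> F i = G i) -> sumR d F = sumR d G.
Proof.
  intros HFG. unfold sumR. apply f_equal, map_ext_in. intros i Hi. apply in_seq in Hi. apply HFG. lia.
Qed.

Section ReducedOperator.
Variables (a b x0 : R) (p q u0 : R -> R).
Hypothesis Hab : a < b.
Hypothesis Hx0 : a <= x0 <= b.
Hypothesis Hp : cont_on a b p.
Hypothesis Hp0 : forall x, a <= x <= b -> p x <> 0.
Hypothesis Hu0 : forall x, a <= x <= b -> u0 x <> 0.
Hypothesis Hu0_deriv : forall x, a <= x <= b -> ex_deriv_on a b u0 x.
Hypothesis Hpu0_deriv : forall x, a <= x <= b -> ex_deriv_on a b (fun t => p t * Dab a b u0 t) x.
Hypothesis HLu0 : forall x, a <= x <= b -> Lop a b p q u0 x = 0.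

(* [u0'] is continuous because [p u0'] is differentiable and [p] is continuous and nonzero. *)
Lemma C1_on_u0 : C1_on a b u0.
Proof.
  split; [exact Hu0_deriv |].
  assert (Hpu0 : cont_on a b (fun t => p t * Dab a b u0 t)).
  { intros x Hx. destruct (Hpu0_deriv x Hx) as [l Hl]. exact (is_deriv_on_cont _ _ _ _ _ Hl). }
  apply (cont_on_ext _ _ (fun t => (p t * Dab a b u0 t) * / p t)).
  - intros t Ht. field. apply Hp0, Ht.
  - apply cont_on_mult; [exact Hpu0 | apply cont_on_inv; [exact Hp0 | exact Hp]].
Qed.

Lemma cont_on_inv_pu0sq : cont_on a b (fun t => / (p t * u0 t ^ 2)).
Proof.
  pose proof (C1_on_cont _ _ _ C1_on_u0) as Hu0c.
  apply cont_on_inv.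
  - intros t Ht. apply Rmult_integral_contrapositive. split; [apply Hp0, Ht | apply pow_nonzero, Hu0, Ht].
  - apply cont_on_mult; [exact Hp |]. simpl.
    apply cont_on_mult; [exact Hu0c | apply cont_on_mult; [exact Hu0c | apply cont_on_const]].
Qed.

(* With [X = c * RInt (S / (p u0^2))] one has [p (u0 X)' = p u0' X + c S / u0]; differentiating
   and using [(p u0')' = - q u0] leaves only [c S' / u0]. *)
Lemma Lop_u0_mul_RInt c S x : C1_on a b S -> a <= x <= b ->
  Lop a b p q (fun t => u0 t * (c * RInt (fun t => / (p t * u0 t ^ 2) * S t) x0 t)) x
  = c * Dab a b S x / u0 x.
Proof.
  intros HS Hx.
  set (w := fun t => / (p t * u0 t ^ 2) * S t).
  set (X := fun y => c * RInt w x0 y).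
  set (P := fun t => p t * Dab a b u0 t).
  assert (HX : forall t, a <= t <= b -> is_deriv_on a b X t (0 * RInt w x0 t + c * w t)).
  { intros t Ht. apply is_deriv_on_mult; [apply is_deriv_on_const | apply is_deriv_on_RInt; auto].
    apply cont_on_mult; [exact cont_on_inv_pu0sq | apply C1_on_cont, HS]. }
  assert (Hflux : forall t, a <= t <= b ->
    p t * Dab a b (fun t => u0 t * X t) t = P t * X t + c * S t * / u0 t).
  { intros t Ht.
    rewrite (Dab_unique _ _ _ _ _ Hab Ht (is_deriv_on_mult _ _ _ _ _ _ _
               (C1_on_is_deriv _ _ _ _ Hab C1_on_u0 Ht) (HX t Ht))).
    unfold P, w. field. split; [apply Hu0 | apply Hp0]; exact Ht. }
  destruct (Hpu0_deriv x Hx) as [lP HlP]. fold P in HlP.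
  assert (HlP' : lP = - (q x * u0 x)).
  { pose proof (HLu0 x Hx) as HL. unfold Lop in HL. fold P in HL.
    rewrite (Dab_unique _ _ _ _ _ Hab Hx HlP) in HL. lra. }
  assert (Hderiv : is_deriv_on a b (fun t => P t * X t + c * S t * / u0 t) x
    (lP * X x + P x * (0 * RInt w x0 x + c * w x)
     + ((0 * S x + c * Dab a b S x) * / u0 x
        + c * S x * (- Dab a b u0 x / (u0 x * u0 x))))).
  { apply is_deriv_on_plus; [apply is_deriv_on_mult; [exact HlP | apply HX, Hx] |].
    apply (is_deriv_on_mult a b (fun t => c * S t) (fun t => / u0 t)).
    - apply (is_deriv_on_mult a b (fun _ => c) S); [apply is_deriv_on_const |].
      apply C1_on_is_deriv; auto.
    - apply is_deriv_on_inv; auto. apply C1_on_is_deriv; auto. apply C1_on_u0. }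
  apply (is_deriv_on_ext _ _ _ _ _ _ Hx (fun t Ht => eq_sym (Hflux t Ht))) in Hderiv.
  change (Dab a b (fun t => p t * Dab a b (fun t => u0 t * X t) t) x + q x * (u0 x * X x)
          = c * Dab a b S x / u0 x).
  rewrite (Dab_unique _ _ _ _ _ Hab Hx Hderiv), HlP'.
  unfold P, w. field. split; [apply Hu0 | apply Hp0]; exact Hx.
Qed.

Lemma Lop_u0_mul_RInt_sumR d c c' (F : nat -> R -> R) (G : nat -> R) x : a <= x <= b ->
  (forall i, (i < d)%nat -> C1_on a b (F i)) ->
  (forall i, (i < d)%nat -> Dab a b (F i) x = c' * (u0 x * G i)) ->
  Lop a b p q (fun t => u0 t *
      (c * RInt (fun t => / (p t * u0 t ^ 2) * sumR d (fun i => F i t)) x0 t)) x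
  = c * c' * sumR d G.
Proof.
  intros Hx HF HdF.
  rewrite Lop_u0_mul_RInt by (auto; apply C1_on_sumR; auto).
  rewrite (Dab_unique _ _ _ _ _ Hab Hx (is_deriv_on_sumR _ _ _ _ _ _
             (fun i Hi => C1_on_is_deriv _ _ _ _ Hab (HF i Hi) Hx))).
  rewrite (sumR_ext _ _ (fun i => (c' * u0 x) * G i)) by (intros i Hi; rewrite HdF by exact Hi; ring).
  rewrite sumR_scal. field. apply Hu0, Hx.
Qed.

End ReducedOperator.

Definition even_mi (n : nat -> nat) : mi := fun k => (2 * Z.of_nat (n k))%Z.

Lemma delta_0_or_1 i k : delta i k = 0%Z \/ delta i k = 1%Z.
Proof. unfold delta. destruct (Nat.eqb k i); auto. Qed.

Lemma delta_eq_1 i k : delta i k = 1%Z <-> k = i.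
Proof.
  unfold delta. destruct (Nat.eqb_spec k i) as [-> | Hki]; split; congruence.
Qed.

Lemma delta_diag i : delta i i = 1%Z.
Proof. apply delta_eq_1. reflexivity. Qed.

Lemma has_neg_spec d m : has_neg d m = true <-> exists k, (k < d)%nat /\ (m k < 0)%Z.
Proof.
  unfold has_neg. rewrite existsb_exists.
  split; intros [k [Hk Hm]]; exists k; rewrite in_seq, Z.ltb_lt in *; split; auto; lia.
Qed.

Lemma has_neg_nonneg d m : (forall k, (k < d)%nat -> (0 <= m k)%Z) -> has_neg d m = false.
Proof.
  intros Hm. apply not_true_iff_false. rewrite has_neg_spec.
  intros [k [Hk Hmk]]. specialize (Hm k Hk). lia.
Qed.

Lemma has_neg_sub_nonpos d m i : (i < d)%nat -> (m i <= 0)%Z -> has_neg d (mi_sub m i) = true.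
Proof.
  intros Hi Hmi. apply has_neg_spec. exists i. split; [exact Hi |].
  unfold mi_sub. rewrite delta_diag. lia.
Qed.

Lemma is_neg_delta_spec d m : is_neg_delta d m = true <->
  exists i, (i < d)%nat /\ forall k, (k < d)%nat -> m k = (- delta i k)%Z.
Proof.
  unfold is_neg_delta. rewrite existsb_exists.
  split; intros [i [Hi H]]; exists i; rewrite in_seq in *; split; try lia.
  - intros k Hk. rewrite forallb_forall in H. apply Z.eqb_eq, H, in_seq. lia.
  - apply forallb_forall. intros k Hk. apply in_seq in Hk. apply Z.eqb_eq, H. lia.
Qed.

Lemma is_neg_delta_witness d m k : (k < d)%nat -> (0 < m k \/ m k < -1)%Z ->
  is_neg_delta d m = false.
Proof.
  intros Hk Hmk. apply not_true_iff_false. rewrite is_neg_delta_spec.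
  intros [i [_ H]]. specialize (H k Hk). destruct (delta_0_or_1 i k) as [E | E]; lia.
Qed.

Lemma filter_length_le_1 (P : nat -> bool) i l : NoDup l ->
  (forall k, In k l -> P k = true -> k = i) -> (length (filter P l) <= 1)%nat.
Proof.
  induction l as [| x l IH]; intros Hnd HP; simpl; [lia |].
  inversion Hnd as [| ? ? Hx Hnd']; subst.
  destruct (P x) eqn:Px; [| apply IH; auto; intros; apply HP; simpl; auto].
  assert (x = i) as -> by (apply HP; simpl; auto).
  destruct (filter P l) as [| y l'] eqn:E; simpl; [lia |].
  assert (Hy : In y (filter P l)) by (rewrite E; left; reflexivity).
  apply filter_In in Hy as [Hy Py].
  assert (y = i) as -> by (apply HP; simpl; auto). contradiction.
Qed.

Lemma admissible_unique_odd d m i : (forall k, (k < d)%nat -> Z.odd (m k) = true -> k = i) ->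
  admissible d m = true.
Proof.
  intros Hodd. apply Nat.leb_le, (filter_length_le_1 _ i); [apply seq_NoDup |].
  intros k Hk. apply in_seq in Hk. apply Hodd. lia.
Qed.

Lemma find_unique (P : nat -> bool) i l : (forall k, In k l -> P k = true <-> k = i) -> In i l ->
  find P l = Some i.
Proof.
  induction l as [| x l IH]; intros HP Hi; [destruct Hi |]; simpl.
  destruct (P x) eqn:Px; [f_equal; apply (HP x); simpl; auto |].
  apply IH; [intros; apply HP; simpl; auto |].
  destruct Hi as [-> | Hi]; [| exact Hi].
  assert (P i = true) by (apply HP; simpl; auto). congruence.
Qed.

Lemma odd_idx_unique_odd d m i : (i < d)%nat ->
  (forall k, (k < d)%nat -> Z.odd (m k) = true <-> k = i) -> odd_idx d m = i.
Proof.
  intros Hi Hodd. unfold odd_idx. rewrite (find_unique _ i); [reflexivity | | apply in_seq; lia].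
  intros k Hk. apply in_seq in Hk. apply Hodd. lia.
Qed.

Lemma odd_idx_lt d m : (1 <= d)%nat -> (odd_idx d m < d)%nat.
Proof.
  intros Hd. unfold odd_idx. destruct (find _ _) eqn:E; [| lia].
  apply find_some in E as [E _]. apply in_seq in E. lia.
Qed.

Lemma sumZ_delta i L :
  fold_right Z.add 0%Z (map (delta i) L) = Z.of_nat (count_occ Nat.eq_dec L i).
Proof.
  induction L as [| k L IH]; [reflexivity |]. simpl. rewrite IH. unfold delta.
  destruct (Nat.eqb_spec k i), (Nat.eq_dec k i); try contradiction; lia.
Qed.

Lemma mi_abs_sub d m i : (i < d)%nat -> mi_abs d (mi_sub m i) = (mi_abs d m - 1)%Z.
Proof.
  intros Hi.
  assert (Hcount : count_occ Nat.eq_dec (seq 0 d) i = 1%nat)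
    by (apply NoDup_count_occ'; [apply seq_NoDup | apply in_seq; lia]).
  assert (Hsum : fold_right Z.add 0%Z (map (delta i) (seq 0 d)) = 1%Z)
    by (rewrite sumZ_delta, Hcount; reflexivity).
  unfold mi_abs, mi_sub. rewrite <- Hsum. clear.
  induction (seq 0 d) as [| k L IH]; simpl; lia.
Qed.

Lemma mi_abs_even d n : mi_abs d (even_mi n) = (2 * Z.of_nat (nabs d n))%Z.
Proof.
  unfold mi_abs, nabs, even_mi. induction (seq 0 d) as [| k L IH]; cbn [map fold_right]; lia.
Qed.

Lemma nabs_zero d n : nabs d n = 0%nat -> forall k, (k < d)%nat -> n k = 0%nat.
Proof.
  unfold nabs. intros H k Hk. assert (Hin : In k (seq 0 d)) by (apply in_seq; lia).
  induction (seq 0 d) as [| j L IH]; simpl in *; [contradiction |].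
  destruct Hin as [-> | Hin]; [lia | apply IH; auto; lia].
Qed.

Lemma nabs_pos d n M : nabs d n = S M -> exists k, (k < d)%nat /\ n k <> 0%nat.
Proof.
  unfold nabs. intros H.
  assert (HL : forall L, fold_right Nat.add 0%nat (map n L) = S M -> exists k, In k L /\ n k <> 0%nat).
  { induction L as [| j L IH]; simpl; intros E; [discriminate |].
    destruct (n j) eqn:Ej; [apply IH in E as [k [Hk Hn]]; eauto | exists j; split; auto; lia]. }
  destruct (HL _ H) as [k [Hk Hn]]. apply in_seq in Hk. exists k. split; [lia | exact Hn].
Qed.

Lemma even_mi_sub_sub n i :
  (fun k => (2 * Z.of_nat (n k) - 2 * delta i k)%Z) = mi_sub (mi_sub (even_mi n) i) i.
Proof. apply functional_extensionality. intros k. unfold mi_sub, even_mi. lia. Qed.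

Lemma has_neg_even d n : has_neg d (even_mi n) = false.
Proof. apply has_neg_nonneg. intros k _. unfold even_mi. lia. Qed.

Lemma admissible_even d n : admissible d (even_mi n) = true.
Proof.
  apply (admissible_unique_odd _ _ 0). intros k _ Hk.
  unfold even_mi in Hk. rewrite Z.odd_mul in Hk. discriminate.
Qed.

Lemma is_neg_delta_all_even d m : (forall k, (k < d)%nat -> Z.even (m k) = true) ->
  is_neg_delta d m = false.
Proof.
  intros Hm. apply not_true_iff_false. rewrite is_neg_delta_spec. intros [i [Hi H]].
  specialize (Hm i Hi). rewrite (H i Hi), delta_diag in Hm. discriminate.
Qed.

Lemma is_neg_delta_even d n : is_neg_delta d (even_mi n) = false.
Proof.
  apply is_neg_delta_all_even. intros k _. unfold even_mi. rewrite Z.even_mul. reflexivity.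
Qed.

Lemma is_neg_delta_sub_sub_even d n i : is_neg_delta d (mi_sub (mi_sub (even_mi n) i) i) = false.
Proof.
  apply is_neg_delta_all_even. intros k _. unfold mi_sub, even_mi.
  replace (2 * Z.of_nat (n k) - delta i k - delta i k)%Z with (2 * (Z.of_nat (n k) - delta i k))%Z
    by lia.
  rewrite Z.even_mul. reflexivity.
Qed.

Lemma odd_sub_even n i k : Z.odd (mi_sub (even_mi n) i k) = true <-> k = i.
Proof.
  unfold mi_sub, even_mi. rewrite <- delta_eq_1.
  destruct (delta_0_or_1 i k) as [-> | ->]; rewrite ?Z.sub_0_r, ?Z.odd_sub, Z.odd_mul; simpl;
    split; congruence.
Qed.

Lemma admissible_sub_even d n i : admissible d (mi_sub (even_mi n) i) = true.
Proof. apply (admissible_unique_odd _ _ i). intros k _. apply odd_sub_even. Qed.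

Lemma odd_idx_sub_even d n i : (i < d)%nat -> odd_idx d (mi_sub (even_mi n) i) = i.
Proof. intros Hi. apply odd_idx_unique_odd; [exact Hi |]. intros k _. apply odd_sub_even. Qed.

Lemma has_neg_sub_even d n i : n i <> 0%nat -> has_neg d (mi_sub (even_mi n) i) = false.
Proof.
  intros Hni. apply has_neg_nonneg. intros k _. unfold mi_sub, even_mi.
  destruct (delta_0_or_1 i k) as [E | E]; [lia |].
  apply delta_eq_1 in E as ->. rewrite delta_diag. lia.
Qed.

Lemma is_neg_delta_sub_even_zero d n i : nabs d n = 0%nat -> (i < d)%nat ->
  is_neg_delta d (mi_sub (even_mi n) i) = true.
Proof.
  intros HN Hi. apply is_neg_delta_spec. exists i. split; [exact Hi |].
  intros k Hk. unfold mi_sub, even_mi. rewrite (nabs_zero d n HN k Hk). lia.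
Qed.

Lemma Xt_aux_has_neg a b x0 p u0 r s d k j : has_neg d j = true ->
  Xt_aux a b x0 p u0 r s d k j = fun _ => 0.
Proof. intros Hj. destruct k; simpl; rewrite Hj; reflexivity. Qed.

Lemma X_aux_has_neg a b x0 p u0 r s d k m : is_neg_delta d m = false -> has_neg d m = true ->
  X_aux a b x0 p u0 r s d k m = fun _ => 0.
Proof. intros Hm Hm'. destruct k; simpl; rewrite Hm, Hm'; reflexivity. Qed.

Section FormalPowers.
Variables (a b x0 : R) (p q u0 : R -> R) (r s : nat -> R -> R) (d : nat).
Hypothesis Hd : (1 <= d)%nat.
Hypothesis Hab : a < b.
Hypothesis Hx0 : a <= x0 <= b.
Hypothesis Hp : cont_on a b p.
Hypothesis Hrs : forall i, (i < d)%nat -> cont_on a b (r i) /\ cont_on a b (s i).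
Hypothesis Hp0 : forall x, a <= x <= b -> p x <> 0.
Hypothesis Hu0 : forall x, a <= x <= b -> u0 x <> 0.
Hypothesis Hu0_deriv : forall x, a <= x <= b -> ex_deriv_on a b u0 x.
Hypothesis Hpu0_deriv : forall x, a <= x <= b -> ex_deriv_on a b (fun t => p t * Dab a b u0 t) x.
Hypothesis HLu0 : forall x, a <= x <= b -> Lop a b p q u0 x = 0.

Let Hu0_C1 : C1_on a b u0 := C1_on_u0 a b p u0 Hp Hp0 Hu0_deriv Hpu0_deriv.

Lemma cont_on_u0_Rop i Y : (i < d)%nat -> C1_on a b Y ->
  cont_on a b (fun t => u0 t * Rop a b (r i) (s i) (fun y => u0 y * Y y) t).
Proof.
  intros Hi HY. destruct (Hrs i Hi) as [Hr Hs].
  assert (HuY : C1_on a b (fun y => u0 y * Y y)) by (apply C1_on_mult; auto).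
  apply cont_on_mult; [apply C1_on_cont, Hu0_C1 |]. unfold Rop.
  apply cont_on_plus; apply cont_on_mult; auto; [apply C1_on_cont, HuY | apply HuY].
Qed.

Lemma Dab_scal_RInt_u0_Rop i c Y x : (i < d)%nat -> C1_on a b Y -> a <= x <= b ->
  Dab a b (fun y => c * RInt (fun t => u0 t * Rop a b (r i) (s i) (fun y => u0 y * Y y) t) x0 y) x
  = c * (u0 x * Rop a b (r i) (s i) (fun y => u0 y * Y y) x).
Proof.
  intros Hi HY Hx. apply (Dab_unique a b _ x); auto.
  apply (is_deriv_on_scal_RInt _ _ _ (fun t => u0 t * Rop a b (r i) (s i) (fun y => u0 y * Y y) t));
    auto using cont_on_u0_Rop.
Qed.

Lemma C1_on_Xt_aux k j : C1_on a b (Xt_aux a b x0 p u0 r s d k j).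
Proof.
  revert j. induction k as [| k IH]; intros j; cbn [Xt_aux].
  - destruct has_neg; apply C1_on_const; auto.
  - destruct has_neg; [apply C1_on_const; auto |].
    destruct negb; [apply C1_on_const; auto |].
    destruct (Nat.odd (S k)); apply C1_on_scal_RInt; auto.
    + apply cont_on_u0_Rop; [apply odd_idx_lt, Hd | apply IH].
    + apply cont_on_mult; [apply (cont_on_inv_pu0sq a b p u0); auto |].
      apply cont_on_sumR. intros i _. apply C1_on_cont, IH.
Qed.

Lemma C1_on_X_aux k m : C1_on a b (X_aux a b x0 p u0 r s d k m).
Proof.
  revert m. induction k as [| k IH]; intros m; cbn [X_aux].
  - destruct is_neg_delta; [| destruct has_neg]; apply C1_on_const; auto.
  - destruct is_neg_delta; [apply C1_on_const; auto |].
    destruct has_neg; [apply C1_on_const; auto |].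
    destruct negb; [apply C1_on_const; auto |].
    destruct (Nat.even (S k)); apply C1_on_scal_RInt; auto.
    + apply cont_on_u0_Rop; [apply odd_idx_lt, Hd | apply IH].
    + apply cont_on_mult; [apply (cont_on_inv_pu0sq a b p u0); auto |].
      apply cont_on_sumR. intros i _. apply C1_on_cont, IH.
Qed.

Lemma Dab_Xt_aux_sub_even n M i x : nabs d n = S M -> (i < d)%nat -> a <= x <= b ->
  Dab a b (Xt_aux a b x0 p u0 r s d (2 * M + 1) (mi_sub (even_mi n) i)) x
  = INR (S (2 * M)) * (u0 x * Rop a b (r i) (s i)
      (fun t => u0 t * Xt a b x0 p u0 r s d
        (fun k => (2 * Z.of_nat (n k) - 2 * delta i k)%Z) t) x).
Proof.
  intros HN Hi Hx. rewrite even_mi_sub_sub. unfold Xt.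
  rewrite !mi_abs_sub, mi_abs_even, HN by exact Hi.
  replace (Z.to_nat (2 * Z.of_nat (S M) - 1 - 1)) with (2 * M)%nat by lia.
  destruct (Nat.eq_dec (n i) 0) as [Hni | Hni].
  - rewrite !Xt_aux_has_neg
      by (apply has_neg_sub_nonpos; [exact Hi | unfold mi_sub, even_mi; rewrite ?Hni, ?delta_diag; lia]).
    unfold Rop. cbv beta.
    rewrite (functional_extensionality (fun t => u0 t * 0) (fun _ => 0)) by (intros; ring).
    rewrite !Dab_const by auto. ring.
  - replace (2 * M + 1)%nat with (S (2 * M)) by lia. cbn [Xt_aux].
    rewrite has_neg_sub_even, admissible_sub_even, odd_idx_sub_even by assumption.
    replace (Nat.odd (S (2 * M))) with true by (symmetry; apply Nat.odd_spec; exists M; lia).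
    cbn [negb].
    apply Dab_scal_RInt_u0_Rop; auto. apply C1_on_Xt_aux.
Qed.

Lemma Dab_X_aux_sub_even n i x : (i < d)%nat -> a <= x <= b ->
  Dab a b (X_aux a b x0 p u0 r s d (2 * nabs d n) (mi_sub (even_mi n) i)) x
  = INR (2 * nabs d n) * (u0 x * Rop a b (r i) (s i)
      (fun t => u0 t * Xp a b x0 p u0 r s d
        (fun k => (2 * Z.of_nat (n k) - 2 * delta i k)%Z) t) x).
Proof.
  intros Hi Hx. rewrite even_mi_sub_sub. unfold Xp.
  rewrite !mi_abs_sub, mi_abs_even by exact Hi.
  pose proof (is_neg_delta_sub_sub_even d n i) as Hnd2.
  destruct (nabs d n) as [| M] eqn:HN.
  - change (2 * 0)%nat with 0%nat. cbn [X_aux].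
    rewrite is_neg_delta_sub_even_zero by assumption.
    rewrite Dab_const by auto. change (INR 0) with 0. ring.
  - destruct (Nat.eq_dec (n i) 0) as [Hni | Hni].
    + destruct (nabs_pos d n M HN) as [k [Hk Hnk]].
      assert (Hk' : k <> i) by congruence.
      assert (Hnd1 : is_neg_delta d (mi_sub (even_mi n) i) = false).
      { apply (is_neg_delta_witness _ _ k Hk). unfold mi_sub, even_mi.
        destruct (delta_0_or_1 i k) as [E | E]; [rewrite E; lia | apply delta_eq_1 in E; contradiction]. }
      rewrite !X_aux_has_neg
        by (assumption || (apply has_neg_sub_nonpos; [exact Hi | unfold mi_sub, even_mi;
              rewrite ?Hni, ?delta_diag; lia])).
      unfold Rop. cbv beta.
      rewrite (functional_extensionality (fun t => u0 t * 0) (fun _ => 0)) by (intros; ring).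
      rewrite !Dab_const by auto. ring.
    + replace (2 * S M)%nat with (S (2 * M + 1)) by lia.
      replace (Z.to_nat (2 * Z.of_nat (S M) - 1 - 1) + 1)%nat with (2 * M + 1)%nat by lia.
      assert (Hnd1 : is_neg_delta d (mi_sub (even_mi n) i) = false).
      { apply (is_neg_delta_witness _ _ i Hi). unfold mi_sub, even_mi. rewrite delta_diag. lia. }
      cbn [X_aux].
      rewrite Hnd1, has_neg_sub_even, admissible_sub_even, odd_idx_sub_even by assumption.
      replace (Nat.even (S (2 * M + 1))) with true by (symmetry; apply Nat.even_spec; exists (S M); lia).
      cbn [negb].
      apply Dab_scal_RInt_u0_Rop; auto. apply C1_on_X_aux.
Qed.

Lemma Lop_u0_Xt_even n x : a <= x <= b ->
  Lop a b p q (fun t => u0 t * Xt a b x0 p u0 r s d (even_mi n) t) x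
  = 2 * INR (nabs d n) * (2 * INR (nabs d n) - 1) *
    sumR d (fun i => Rop a b (r i) (s i)
      (fun t => u0 t * Xt a b x0 p u0 r s d
        (fun k => (2 * Z.of_nat (n k) - 2 * delta i k)%Z) t) x).
Proof.
  intros Hx. unfold Xt at 1. rewrite mi_abs_even.
  destruct (nabs d n) as [| M] eqn:HN.
  - change (Z.to_nat (2 * Z.of_nat 0)) with 0%nat. cbn [Xt_aux]. rewrite has_neg_even.
    rewrite (functional_extensionality (fun t => u0 t * 1) u0) by (intros; ring).
    rewrite HLu0 by exact Hx. change (INR 0) with 0. ring.
  - replace (Z.to_nat (2 * Z.of_nat (S M))) with (S (2 * M + 1)) by lia.
    cbn [Xt_aux]. rewrite has_neg_even, admissible_even.
    replace (Nat.odd (S (2 * M + 1))) with false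
      by (symmetry; apply not_true_iff_false; rewrite Nat.odd_spec; intros [k Hk]; lia).
    cbn [negb].
    rewrite (Lop_u0_mul_RInt_sumR a b x0 p q u0 Hab Hx0 Hp Hp0 Hu0 Hu0_deriv Hpu0_deriv HLu0 d
      _ (INR (S (2 * M))) _ (fun i => Rop a b (r i) (s i)
        (fun t => u0 t * Xt a b x0 p u0 r s d
        (fun k => (2 * Z.of_nat (n k) - 2 * delta i k)%Z) t) x) x Hx).
    + rewrite !S_INR, plus_INR, mult_INR. change (INR 2) with 2. change (INR 1) with 1. ring.
    + intros i _. apply C1_on_Xt_aux.
    + intros i Hi. apply Dab_Xt_aux_sub_even; assumption.
Qed.

Lemma Lop_u0_Xp_even n x : a <= x <= b ->
  Lop a b p q (fun t => u0 t * Xp a b x0 p u0 r s d (even_mi n) t) x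
  = (2 * INR (nabs d n) + 1) * (2 * INR (nabs d n)) *
    sumR d (fun i => Rop a b (r i) (s i)
      (fun t => u0 t * Xp a b x0 p u0 r s d
        (fun k => (2 * Z.of_nat (n k) - 2 * delta i k)%Z) t) x).
Proof.
  intros Hx. unfold Xp at 1. rewrite mi_abs_even.
  replace (Z.to_nat (2 * Z.of_nat (nabs d n)) + 1)%nat with (S (2 * nabs d n)) by lia.
  cbn [X_aux]. rewrite is_neg_delta_even, has_neg_even, admissible_even.
  replace (Nat.even (S (2 * nabs d n))) with false
    by (symmetry; apply not_true_iff_false; rewrite Nat.even_spec; intros [k Hk]; lia).
  cbn [negb].
  rewrite (Lop_u0_mul_RInt_sumR a b x0 p q u0 Hab Hx0 Hp Hp0 Hu0 Hu0_deriv Hpu0_deriv HLu0 d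
    _ (INR (2 * nabs d n)) _ (fun i => Rop a b (r i) (s i)
      (fun t => u0 t * Xp a b x0 p u0 r s d
        (fun k => (2 * Z.of_nat (n k) - 2 * delta i k)%Z) t) x) x Hx).
  - rewrite S_INR, mult_INR. change (INR 2) with 2. ring.
  - intros i _. apply C1_on_X_aux.
  - intros i Hi. apply Dab_X_aux_sub_even; assumption.
Qed.

End FormalPowers.

Theorem mainTheorem6 (d : nat) (x1 x2 x0 : R) (p q u0 : R -> R) (r s : nat -> R -> R) :
  (1 <= d)%nat -> x1 < x2 -> x1 <= x0 <= x2 ->
  cont_on x1 x2 p -> cont_on x1 x2 q ->
  (forall i, (i < d)%nat -> cont_on x1 x2 (r i) /\ cont_on x1 x2 (s i)) ->
  (forall x, x1 <= x <= x2 -> p x <> 0) ->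
  (forall x, x1 <= x <= x2 -> u0 x <> 0) ->
  (forall x, x1 <= x <= x2 -> ex_deriv_on x1 x2 u0 x) ->
  (forall x, x1 <= x <= x2 -> ex_deriv_on x1 x2 (fun t => p t * Dab x1 x2 u0 t) x) ->
  (forall x, x1 <= x <= x2 -> Lop x1 x2 p q u0 x = 0) ->
  forall (n : nat -> nat) (x : R), x1 <= x <= x2 ->
    Lop x1 x2 p q
      (fun t => u0 t * Xt x1 x2 x0 p u0 r s d (fun k => (2 * Z.of_nat (n k))%Z) t) x
    = 2 * INR (nabs d n) * (2 * INR (nabs d n) - 1) *
      sumR d (fun i => Rop x1 x2 (r i) (s i)
        (fun t => u0 t * Xt x1 x2 x0 p u0 r s d
                    (fun k => (2 * Z.of_nat (n k) - 2 * delta i k)%Z) t) x)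
  /\
    Lop x1 x2 p q
      (fun t => u0 t * Xp x1 x2 x0 p u0 r s d (fun k => (2 * Z.of_nat (n k))%Z) t) x
    = (2 * INR (nabs d n) + 1) * (2 * INR (nabs d n)) *
      sumR d (fun i => Rop x1 x2 (r i) (s i)
        (fun t => u0 t * Xp x1 x2 x0 p u0 r s d
                    (fun k => (2 * Z.of_nat (n k) - 2 * delta i k)%Z) t) x).
Proof.
  intros Hd Hab Hx0 Hp _ Hrs Hp0 Hu0 Hu0_deriv Hpu0_deriv HLu0 n x Hx.
  split.
  - apply Lop_u0_Xt_even; assumption.
  - apply Lop_u0_Xp_even; assumption.
Qed.
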